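(* Assume the pairs $(Y_i(0),Y_i(1))$, $i\in[N]$, are independent and identically distributed, with $Y_i(a)\sim F_a$ for $a\in\{0,1\}$, where $F_a$ is supported on a finite set $\mathcal{Y}=\{y_1,\dots,y_K\}$, and assume the assignment vector $Z=(Z_1,\dots,Z_N)\in\{0,1\}^N$ is independent of the potential outcomes. Let $P_i=\mathbb{P}(Z_i=1)$, $P=\frac1N\sum_i P_i$, $\tilde P=\min(P,1-P)>0$, and $\epsilon>0$. Let $X^{true}$ be the indicator vector $X^{true,(a)}_{ik}=\mathbb{I}(Y_i(a)=y_k)$ of the true potential outcomes, let $Q$ be a symmetric matrix with $\mathbf{Var}_Z[\hat\tau]=(X^{true})^TQX^{true}$, and let $V^*$ be the maximum of $X^TQX$ over all binary $X=(X^{(a)}_{ik})$ satisfying constraints (a)--(d) in the context. Then $$\mathbb{P}\big(V^*\ge \mathbf{Var}_Z[\hat\tau]\big)\ \ge\ 1-\beta,\qquad \beta:=8\exp\Big(-\frac{\epsilon^2}{4}N\tilde P\Big)+\frac{32}{N^2\tilde P^2}\sum_{i,j\in[N]}\mathbf{Cov}(Z_i,Z_j).$$ More precisely, with probability at least $1-\beta$ the true indicator vector $X^{true}$ satisfies constraint (d), hence is feasible.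
   Context: Finite population of $N$ units with treatment indicators $Z_i\in\{0,1\}$, potential outcomes $Y_i(0),Y_i(1)$, observed outcomes $Y_i^{obs}=Y_i(Z_i)$, $N_1=\sum_i Z_i$, $N_0=N-N_1$. $\hat\tau$ is an estimator of the average treatment effect whose variance over the randomness of $Z$ (potential outcomes held fixed) is denoted $\mathbf{Var}_Z[\hat\tau]$. The constraints on binary variables $X^{(a)}_{ik}\in\{0,1\}$ ($a\in\{0,1\}$, $i\in[N]$, $k\in[K]$) are: (a) for all $i,k$: $X^{(Z_i)}_{ik}=1$ iff $Y_i^{obs}=y_k$; (b) for all $a,i,k$: $X^{(a)}_{ik}=0$ whenever $y_k\notin \mathrm{supp}(F_a)$; (c) for all $a,i$: $\sum_{k=1}^K X^{(a)}_{ik}=1$; (d) for all $a,k$: $\left|\sum_{i=1}^N X^{(a)}_{ik}\left(\frac{Z_i}{N_1}-\frac{1-Z_i}{N_0}\right)\right|\le \epsilon$. *)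

From HB Require Import structures.
From mathcomp Require Import all_boot all_order all_algebra.
From mathcomp Require Import boolp reals.
From mathcomp Require Import sequences exp.
Set Implicit Arguments. Unset Strict Implicit. Unset Printing Implicit Defensive.
Import Order.TTheory GRing.Theory Num.Theory.
Local Open Scope ring_scope.

(* Finite probability model.
   - units are 'I_N, outcome labels are 'I_K (label k stands for y_k = yv k);
   - an assignment is z : {ffun 'I_N -> bool}  (Z_i = 1 iff z i = true);
   - potential outcomes are y : {ffun 'I_N -> 'I_K * 'I_K},
     (y i).1 = label of Y_i(0), (y i).2 = label of Y_i(1);
   - pZ is the (arbitrary) law of Z, pF the common joint law of (Y_i(0),Y_i(1));
   - the joint law of (Z, Y) is pZ z * \prod_i pF (y i): iid pairs, Z independent
     of the potential outcomes. *)

Definition assign (N : nat) := {ffun 'I_N -> bool}.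
Definition pouts (N K : nat) := {ffun 'I_N -> 'I_K * 'I_K}.

Definition is_pmf (R : realType) (T : finType) (p : T -> R) :=
  (forall t, 0 <= p t) /\ \sum_t p t = 1.

Definition jointP (R : realType) (N K : nat) (pZ : assign N -> R)
  (pF : 'I_K * 'I_K -> R) (z : assign N) (y : pouts N K) : R :=
  pZ z * \prod_i pF (y i).

Definition Prob (R : realType) (N K : nat) (pZ : assign N -> R)
  (pF : 'I_K * 'I_K -> R) (E : assign N -> pouts N K -> bool) : R :=
  \sum_(z : assign N) \sum_(y : pouts N K | E z y) jointP pZ pF z y.

(* marginal law F_a of Y_i(a) (a = false for 0, true for 1) and its support *)
Definition margF (R : realType) (K : nat) (pF : 'I_K * 'I_K -> R)
  (a : bool) (k : 'I_K) : R :=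
  if a then \sum_l pF (l, k) else \sum_l pF (k, l).
Definition suppF (R : realType) (K : nat) (pF : 'I_K * 'I_K -> R) (a : bool)
  (k : 'I_K) : bool := 0 < margF pF a k.

Definition Ylab (N K : nat) (y : pouts N K) (a : bool) (i : 'I_N) : 'I_K :=
  if a then (y i).2 else (y i).1.

Definition Yobs (R : realType) (N K : nat) (yv : 'I_K -> R) (z : assign N)
  (y : pouts N K) (i : 'I_N) : R := yv (Ylab y (z i) i).

Definition Xidx (N K : nat) := (bool * 'I_N * 'I_K)%type.
Definition Xvar (N K : nat) := {ffun Xidx N K -> bool}.

Definition Xtrue (N K : nat) (y : pouts N K) : Xvar N K :=
  [ffun s : Xidx N K => Ylab y s.1.1 s.1.2 == s.2].

Definition quadf (R : realType) (N K : nat) (Q : Xidx N K -> Xidx N K -> R)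
  (X : Xvar N K) : R :=
  \sum_s \sum_t (X s)%:R * Q s t * (X t)%:R.

Definition N1 (R : realType) (N : nat) (z : assign N) : R := \sum_i (z i)%:R.
Definition N0 (R : realType) (N : nat) (z : assign N) : R := N%:R - N1 R z.

Definition cstr_a (R : realType) (N K : nat) (yv : 'I_K -> R) (z : assign N)
  (y : pouts N K) (X : Xvar N K) :=
  forall i k, X (z i, i, k) = true <-> Yobs yv z y i = yv k.
Definition cstr_b (R : realType) (N K : nat) (pF : 'I_K * 'I_K -> R)
  (X : Xvar N K) :=
  forall a i k, ~~ suppF pF a k -> X (a, i, k) = false.
Definition cstr_c (N K : nat) (X : Xvar N K) :=
  forall a i, (\sum_k nat_of_bool (X (a, i, k)))%N = 1%N.
Definition cstr_d (R : realType) (N K : nat) (eps : R) (z : assign N)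
  (X : Xvar N K) :=
  forall a k,
    `| \sum_i (X (a, i, k))%:R *
          ((z i)%:R / N1 R z - (1 - (z i)%:R) / N0 R z) | <= eps.

Definition feasible (R : realType) (N K : nat) (yv : 'I_K -> R)
  (pF : 'I_K * 'I_K -> R) (eps : R) (z : assign N) (y : pouts N K)
  (X : Xvar N K) :=
  [/\ cstr_a yv z y X, cstr_b pF X, cstr_c X & cstr_d eps z X].

(* variance of the estimator over the randomness of Z, potential outcomes fixed;
   the estimator is a function of the assignment and the observed outcomes *)
Definition EZ (R : realType) (N : nat) (pZ : assign N -> R) (f : assign N -> R) : R :=
  \sum_z pZ z * f z.
Definition VarZ (R : realType) (N K : nat) (pZ : assign N -> R) (yv : 'I_K -> R)
  (tauhat : assign N -> ('I_N -> R) -> R) (y : pouts N K) : R :=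
  let t := fun z => tauhat z (Yobs yv z y) in
  EZ pZ (fun z => (t z - EZ pZ t) ^+ 2).

Definition Pi (R : realType) (N : nat) (pZ : assign N -> R) (i : 'I_N) : R :=
  EZ pZ (fun z => (z i)%:R).
Definition Pbar (R : realType) (N : nat) (pZ : assign N -> R) : R :=
  (N%:R)^-1 * \sum_i Pi pZ i.
Definition Ptil (R : realType) (N : nat) (pZ : assign N -> R) : R :=
  Num.min (Pbar pZ) (1 - Pbar pZ).
Definition CovZ (R : realType) (N : nat) (pZ : assign N -> R) (i j : 'I_N) : R :=
  EZ pZ (fun z => (z i)%:R * (z j)%:R) - Pi pZ i * Pi pZ j.

Definition beta (R : realType) (N : nat) (pZ : assign N -> R) (eps : R) : R :=
  8 * expR (- (eps ^+ 2 / 4) * N%:R * Ptil pZ)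
  + 32 / (N%:R ^+ 2 * Ptil pZ ^+ 2) * \sum_i \sum_j CovZ pZ i j.

(* Given the assignment z, constraint (d) for the true indicators says that every
   weighted count D_{a,k} = sum_i [Y_i(a) = y_k] w_i, with w_i = Z_i/N_1 - (1-Z_i)/N_0,
   is at most eps in absolute value.  The weights sum to 0, sum_i w_i^2 =
   S := 1/N_1 + 1/N_0, and the pairs (Y_i(0), Y_i(1)) are i.i.d. and independent of z,
   so a Chernoff bound (Markov's inequality for e^{lam D} + e^{-lam D} - 2, the bound
   e^x <= 1 + x + 7/9 x^2 on [-1, 1], lam = eps/S) gives
   P(|D_{a,k}| > eps | z) <= 4 P(Y(a) = y_k) exp(-eps^2 N Ptil / 4) as soon as
   S <= 64/(31 N Ptil); summing over k and a yields the term 8 exp(...).  That bound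
   on S holds whenever (N_1 - E N_1)^2 < (N Ptil)^2/32, and Chebyshev's inequality
   bounds the probability of the opposite event by 32 Var(N_1)/(N Ptil)^2, where
   Var(N_1) = sum_{i,j} Cov(Z_i, Z_j).  Constraints (a)-(c) hold for X^true almost
   surely, so X^true is feasible whenever it satisfies (d). *)

From HB Require Import structures.
From mathcomp Require Import all_boot all_order all_algebra.
From mathcomp Require Import boolp reals.
From mathcomp Require Import sequences exp.
From mathcomp Require Import convex interval_inference.
From mathcomp Require Import ring lra.
Set Implicit Arguments. Unset Strict Implicit. Unset Printing Implicit Defensive.
Import Order.TTheory GRing.Theory Num.Theory.
Local Open Scope ring_scope.

Section RealInequalities.
Variable R : realType.
Implicit Types a b c t u v x A B V : R.

Lemma expR_mul_le_chord t b : 0 <= t -> t <= 1 ->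
  expR (t * b) <= t * expR b + (1 - t).
Proof.
move=> t0 t1; have := @convex_expR R (Itv01 t0 t1) b 0.
by rewrite !convRE /= /unstable.onem mulr0 addr0 expR0 mulr1.
Qed.

Lemma expR_mul_sub1_le t A : 0 <= t -> t <= 1/2 ->
  expR (t * A) - 1 <= 2 * t * (expR (A / 2) - 1).
Proof.
move=> t0 t1; have := @expR_mul_le_chord (2 * t) (A / 2).
have -> : 2 * t * (A / 2) = t * A by field.
by move=> /(_ ltac:(lra) ltac:(lra)); lra.
Qed.

Lemma expR_le_inv1B t : t < 1 -> expR t <= (1 - t)^-1.
Proof.
move=> t1; rewrite -[expR t]invrK lef_pV2 ?posrE ?invr_gt0 ?expR_gt0 ?subr_gt0 //.
by rewrite -expRN expR_ge1Dx.
Qed.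

Lemma sqr_le_quadratic a v b c b' :
  0 <= a -> a <= 1 + v + b * v ^+ 2 -> -c <= v -> v <= c -> 0 <= b ->
  1 + 2 * b + 2 * b * c + b ^+ 2 * c ^+ 2 <= 4 * b' ->
  a ^+ 2 <= 1 + 2 * v + b' * (2 * v) ^+ 2.
Proof.
move=> a0 a_le vc cv b0 hb.
have v2 : v ^+ 2 <= c ^+ 2.
  have : 0 <= (c - v) * (c + v) by apply: mulr_ge0; lra.
  by rewrite !expr2; lra.
have v3 : v * v ^+ 2 <= c * v ^+ 2 by rewrite ler_wpM2r ?sqr_ge0.
have v4 : v ^+ 2 * v ^+ 2 <= c ^+ 2 * v ^+ 2 by rewrite ler_wpM2r ?sqr_ge0.
have a2 : a ^+ 2 <= (1 + v + b * v ^+ 2) ^+ 2 by rewrite lerXn2r ?nnegrE //; lra.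
apply: (le_trans a2).
have -> : (1 + v + b * v ^+ 2) ^+ 2 = 1 + 2 * v + (1 + 2 * b) * v ^+ 2
  + 2 * b * (v * v ^+ 2) + b ^+ 2 * (v ^+ 2 * v ^+ 2) by ring.
have -> : b' * (2 * v) ^+ 2 = 4 * b' * v ^+ 2 by ring.
have := sqr_ge0 v; have := sqr_ge0 b; nra.
Qed.

Lemma expR_double_le_quadratic x b c b' :
  -c <= x -> x <= c -> 0 <= b ->
  1 + 2 * b + 2 * b * c + b ^+ 2 * c ^+ 2 <= 4 * b' ->
  expR x <= 1 + x + b * x ^+ 2 -> expR (2 * x) <= 1 + 2 * x + b' * (2 * x) ^+ 2.
Proof.
move=> cx xc b0 hb hx; rewrite -[2]/(2%:R) expRM_natl.
exact: (@sqr_le_quadratic (expR x) x b c b' (expR_ge0 x)).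
Qed.

(* Five squarings of [expR (x/32) <= (1 - x/32)^-1]; the constants are tuned so
   that each step satisfies the hypothesis of [expR_double_le_quadratic]. *)
Lemma expR_le_quadratic x : `|x| <= 1 -> expR x <= 1 + x + 7/9 * x ^+ 2.
Proof.
rewrite ler_norml => /andP[x_ge x_le].
set u := x / 32.
have u_ge : -(1/32) <= u by rewrite /u; lra.
have u_le : u <= 1/32 by rewrite /u; lra.
have base : expR u <= 1 + u + 32/31 * u ^+ 2.
  have pos : 0 < 1 - u by lra.
  have u1 : u < 1 by lra.
  apply: le_trans (expR_le_inv1B u1) _.
  rewrite -(ler_pM2r pos) mulVf ?gt_eqF //.
  have : u * u ^+ 2 <= 1/32 * u ^+ 2 by rewrite ler_wpM2r ?sqr_ge0.
  have -> : (1 + u + 32/31 * u ^+ 2) * (1 - u) = 1 + 1/31 * u ^+ 2 - 32/31 * (u * u ^+ 2)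
    by field.
  have := sqr_ge0 u; lra.
have -> : x = 2 * (2 * (2 * (2 * (2 * u)))) by rewrite /u; field.
apply: (@expR_double_le_quadratic _ (2/3) (1/2)); try lra.
apply: (@expR_double_le_quadratic _ (13/20) (1/4)); try lra.
apply: (@expR_double_le_quadratic _ (7/10) (1/8)); try lra.
apply: (@expR_double_le_quadratic _ (4/5) (1/16)); try lra.
by apply: (@expR_double_le_quadratic _ (32/31) (1/32)); try lra.
Qed.

Lemma expR_add_expRN_ge2 x : 2 <= expR x + expR (- x).
Proof. by have := expR_ge1Dx x; have := expR_ge1Dx (- x); lra. Qed.

Lemma expR_add_expRN_ge_norm a b x : 0 <= a -> b < `|x| ->
  expR (a * b) <= expR (a * x) + expR (- (a * x)).
Proof.
move=> a0 bx; have := expR_ge0 (a * x); have := expR_ge0 (- (a * x)).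
have : expR (a * b) <= expR (a * `|x|) by rewrite ler_expR ler_wpM2l // ltW.
by case: (ger0P x) => _; rewrite ?mulrN ?opprK; lra.
Qed.

Lemma expR_ratio_le u V A B : 0 <= u -> 31/64 * u <= V ->
  A <= 7/9 * V -> B <= 7/9 * V -> 2 < expR (u / 4) ->
  4 * (expR (A / 2) + expR (B / 2) - 2) / (expR V - 2) <= 8 * expR (- (u / 4)).
Proof.
move=> u0 uV AV BV u2.
set X := expR (7/18 * V); set m := expR (- (u / 4)).
have m_le : m <= 1/2.
  have : m * expR (u / 4) = 1 by rewrite /m -expRD addNr expR0.
  have := expR_gt0 (- (u / 4)); rewrite -/m; nra.
have X_le : X <= m * expR V.
  have -> : m * expR V = X * expR (11/18 * V - u / 4).
    by rewrite /m /X -!expRD; congr expR; field.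
  rewrite -[leLHS]mulr1; apply: ler_wpM2l; first exact: expR_ge0.
  by apply: le_trans (expR_ge1Dx _); lra.
have V2 : 2 < expR V by apply: lt_le_trans u2 _; rewrite ler_expR; lra.
have AX : expR (A / 2) <= X by rewrite ler_expR; lra.
have BX : expR (B / 2) <= X by rewrite ler_expR; lra.
rewrite ler_pdivrMr ?subr_gt0 //; lra.
Qed.

Lemma invD_le_of_near_mean (n1 n0 m M L : R) :
  0 < L -> L <= m -> L <= M -> n1 + n0 = m + M -> (n1 - m) ^+ 2 < L ^+ 2 / 32 ->
  [/\ 0 < n1, 0 < n0 & n1^-1 + n0^-1 <= 64/31/L].
Proof.
move=> L0 Lm LM n_sum dev; set d := n1 - m.
have d_lt : d ^+ 2 * 32 < L ^+ 2 by rewrite -ltr_pdivlMr.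
have [d_ge d_le] : - L < d /\ d < L by split; nra.
have n1_ge : L + d <= n1 by rewrite /d; lra.
have n0_ge : L - d <= n0 by rewrite /d; lra.
split; [lra|lra|].
apply: (le_trans (y := (L + d)^-1 + (L - d)^-1)).
  by apply: lerD; rewrite lef_pV2 ?posrE; lra.
have pos : 0 < 31 * L * ((L + d) * (L - d)) by rewrite !mulr_gt0 //; lra.
rewrite -(ler_pM2r pos).
have -> : ((L + d)^-1 + (L - d)^-1) * (31 * L * ((L + d) * (L - d))) = 62 * L ^+ 2.
  by field; rewrite !gt_eqF //; lra.
have -> : 64 / 31 / L * (31 * L * ((L + d) * (L - d))) = 64 * (L ^+ 2 - d ^+ 2).
  by field; rewrite gt_eqF.
lra.
Qed.

End RealInequalities.

Section FiniteSums.
Variables (R : realType) (T : finType).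
Implicit Types (W g : T -> R) (E P : pred T).

Lemma markov_sum W g E c : 0 < c -> (forall y, 0 <= W y) -> (forall y, 0 <= g y) ->
  (forall y, E y -> c <= g y) -> \sum_(y | E y) W y <= (\sum_y W y * g y) / c.
Proof.
move=> c0 W0 g0 Eg; rewrite ler_pdivlMr // big_distrl /= [leRHS](bigID E) /=.
rewrite -[leLHS]addr0 lerD ?sumr_ge0 // => [|y _]; last exact: mulr_ge0.
by apply: ler_sum => y Ey; rewrite ler_wpM2l ?Eg.
Qed.

Lemma union_bound (I : finType) W P (Q : I -> pred T) :
  (forall y, 0 <= W y) -> (forall y, P y -> exists i, Q i y) ->
  \sum_(y | P y) W y <= \sum_i \sum_(y | Q i y) W y.
Proof.
move=> W0 PQ; apply: le_trans (_ : \sum_(y | P y) \sum_(i | Q i y) W y <= _).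
  apply: ler_sum => y Py; have [i Qi] := PQ y Py.
  by rewrite (bigD1 i) //= lerDl sumr_ge0.
rewrite [leRHS](exchange_big_dep xpredT) //= [leRHS](bigID P) /= lerDl.
by apply: sumr_ge0 => y _; apply: sumr_ge0.
Qed.

End FiniteSums.

Section ExpSums.
Variables (R : realType) (N : nat).
Implicit Types v : 'I_N -> R.

Definition expm1_sum v : R := \sum_i (expR (v i) - 1).

Lemma expm1_sum_ge0 v : \sum_i v i = 0 -> 0 <= expm1_sum v.
Proof.
move=> v0; rewrite -v0; apply: ler_sum => i _.
by have := expR_ge1Dx (v i); lra.
Qed.

Lemma expm1_sum_le_sqr v : \sum_i v i = 0 -> (forall i, `|v i| <= 1) ->
  expm1_sum v <= 7/9 * \sum_i v i ^+ 2.
Proof.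
move=> v0 v1; rewrite -[leRHS]add0r -{1}v0 big_distrr -big_split /=.
by apply: ler_sum => i _; have := expR_le_quadratic (v1 i); lra.
Qed.

End ExpSums.

Section ProductMeasure.
Variables (R : realType) (T : finType) (p : T -> R) (N : nat).
Hypothesis p_pmf : is_pmf p.
Implicit Types (P : pred T) (w : 'I_N -> R) (y : {ffun 'I_N -> T}).
Local Notation mass P := (\sum_(t | P t) p t).

Lemma mass_ge0 P : 0 <= mass P.
Proof. by rewrite sumr_ge0 // => t _; apply: p_pmf.1. Qed.

Lemma massC P : mass (predC P) = 1 - mass P.
Proof. by rewrite -p_pmf.2 [X in _ = X - _](bigID P) /= addrC addrK. Qed.

Lemma mass_le1 P : mass P <= 1.
Proof. by have := mass_ge0 (predC P); rewrite massC subr_ge0. Qed.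

Lemma prod_pmf_ge0 y : 0 <= \prod_i p (y i).
Proof. by apply: prodr_ge0 => i _; apply: p_pmf.1. Qed.

Lemma sum_prod_pmf : \sum_(y : {ffun 'I_N -> T}) \prod_i p (y i) = 1.
Proof.
by rewrite -(bigA_distr_bigA (fun (_ : 'I_N) t => p t)) big1 // => i _; apply: p_pmf.2.
Qed.

Lemma sum_prod_pmf_le1 (E : pred {ffun 'I_N -> T}) :
  \sum_(y | E y) \prod_i p (y i) <= 1.
Proof.
rewrite -[leRHS]sum_prod_pmf [leRHS](bigID E) /= lerDl.
by apply: sumr_ge0 => y _; apply: prod_pmf_ge0.
Qed.

Definition wcount P w y : R := \sum_i (P (y i))%:R * w i.

Lemma wcountZ P w y c : c * wcount P w y = wcount P (fun i => c * w i) y.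
Proof. by rewrite /wcount big_distrr; apply: eq_bigr => i _ /=; ring. Qed.

Lemma wcountN P w y : - wcount P w y = wcount P (fun i => - w i) y.
Proof. by rewrite -mulN1r wcountZ; apply: eq_bigr => i _; rewrite mulN1r mulrN. Qed.

Lemma wcount_predC P w y : \sum_i w i = 0 -> wcount (predC P) w y = - wcount P w y.
Proof.
move=> w0; rewrite -[RHS]add0r -w0 /wcount -sumrB; apply: eq_bigr => i _ /=.
by case: (P (y i)) => /=; ring.
Qed.

Lemma wcount_mgf P w :
  \sum_(y : {ffun 'I_N -> T}) (\prod_i p (y i)) * expR (wcount P w y) =
  \prod_i (1 + mass P * (expR (w i) - 1)).
Proof.
have mgf1 i : \sum_t p t * (if P t then expR (w i) else 1)
              = 1 + mass P * (expR (w i) - 1).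
  rewrite (eq_bigr (fun t => p t + (if P t then p t * (expR (w i) - 1) else 0))).
    by rewrite big_split /= p_pmf.2 -big_mkcond -big_distrl.
  by move=> t _; case: (P t); ring.
under eq_bigr do rewrite -mgf1; rewrite bigA_distr_bigA /=.
apply: eq_bigr => y _; rewrite /wcount expR_sum -big_split /=.
by apply: eq_bigr => i _; case: (P (y i)); rewrite /= ?mul1r ?mul0r ?expR0.
Qed.

Lemma wcount_mgf_le P w :
  \sum_(y : {ffun 'I_N -> T}) (\prod_i p (y i)) * expR (wcount P w y) <=
  expR (mass P * expm1_sum w).
Proof.
rewrite wcount_mgf /expm1_sum big_distrr expR_sum; apply: ler_prod => i _.
have := mass_ge0 P; have := mass_le1 P; have := expR_ge0 (w i) => ? ? ?.
by rewrite expR_ge1Dx andbT; nra.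
Qed.

Lemma wcount_mgf_sub1_le P w : mass P <= 1/2 ->
  \sum_(y : {ffun 'I_N -> T}) (\prod_i p (y i)) * expR (wcount P w y) - 1 <=
  2 * mass P * (expR (expm1_sum w / 2) - 1).
Proof.
move=> P_le; have := expR_mul_sub1_le (expm1_sum w) (mass_ge0 P) P_le.
by have := wcount_mgf_le P w; lra.
Qed.

(* For [mass P > 1/2] pass to the complement, whose weighted count is the
   opposite one because the weights sum to zero. *)
Lemma wcount_mgf_pair_le P w : \sum_i w i = 0 ->
  \sum_(y : {ffun 'I_N -> T}) (\prod_i p (y i)) * expR (wcount P w y)
  + \sum_(y : {ffun 'I_N -> T}) (\prod_i p (y i)) * expR (wcount P (fun i => - w i) y) - 2 <=
  2 * mass P * (expR (expm1_sum w / 2) + expR (expm1_sum (fun i => - w i) / 2) - 2).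
Proof.
move=> w0; have wN0 : \sum_i - w i = 0 by rewrite sumrN w0 oppr0.
have [P_le|P_gt] := lerP (mass P) (1/2).
  by have := wcount_mgf_sub1_le w P_le; have := wcount_mgf_sub1_le (fun i => - w i) P_le; lra.
have PC_le : mass (predC P) <= 1/2 by rewrite massC; lra.
have e1 y : wcount P w y = wcount (predC P) (fun i => - w i) y.
  by rewrite wcount_predC // -wcountN opprK.
have e2 y : wcount P (fun i => - w i) y = wcount (predC P) w y.
  by rewrite wcount_predC // -wcountN.
under eq_bigr do rewrite e1; under [X in _ + X - _]eq_bigr do rewrite e2.
have := wcount_mgf_sub1_le (fun i => - w i) PC_le; have := wcount_mgf_sub1_le w PC_le.
rewrite massC.
have := expR_ge1Dx (expm1_sum w / 2); have := expm1_sum_ge0 w0.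
have := expR_ge1Dx (expm1_sum (fun i => - w i) / 2); have := expm1_sum_ge0 wN0.
nra.
Qed.

Lemma wcount_tail_le P w a b : \sum_i w i = 0 -> 0 <= a -> 2 < expR (a * b) ->
  \sum_(y | b < `|wcount P w y|) \prod_i p (y i) <=
  2 * mass P * (expR (expm1_sum (fun i => a * w i) / 2)
                + expR (expm1_sum (fun i => - (a * w i)) / 2) - 2)
  / (expR (a * b) - 2).
Proof.
move=> w0 a0 ab2.
pose g y := expR (a * wcount P w y) + expR (- (a * wcount P w y)) - 2.
have g0 y : 0 <= g y by have := expR_add_expRN_ge2 (a * wcount P w y); rewrite /g; lra.
have g_ge y : b < `|wcount P w y| -> expR (a * b) - 2 <= g y.
  by move=> /(expR_add_expRN_ge_norm a0); rewrite /g; lra.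
have c0 : 0 < expR (a * b) - 2 by rewrite subr_gt0.
apply: le_trans (markov_sum c0 prod_pmf_ge0 g0 g_ge) _.
apply: ler_wpM2r; first by rewrite invr_ge0 ltW.
have aw0 : \sum_i a * w i = 0 by rewrite -big_distrr /= w0 mulr0.
apply: le_trans _ (wcount_mgf_pair_le P aw0).
rewrite /g; under eq_bigr do rewrite !wcountZ wcountN mulrBr mulrDr.
by rewrite sumrB big_split /= -big_distrl /= sum_prod_pmf mul1r.
Qed.

End ProductMeasure.

Section AssignmentWeights.
Variables (R : realType) (N : nat) (z : assign N).
Hypotheses (N1_gt0 : 0 < N1 R z) (N0_gt0 : 0 < N0 R z).

Definition assign_weight (i : 'I_N) : R := (z i)%:R / N1 R z - (1 - (z i)%:R) / N0 R z.

Lemma sum_untreated : \sum_i (1 - (z i)%:R) = N0 R z :> R.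
Proof. by rewrite sumrB sumr_const card_ord. Qed.

Lemma sum_assign_weight : \sum_i assign_weight i = 0.
Proof.
rewrite sumrB -!big_distrl /= sum_untreated.
by rewrite !divff ?gt_eqF ?subrr.
Qed.

Lemma sum_assign_weight_sqr :
  \sum_i assign_weight i ^+ 2 = (N1 R z)^-1 + (N0 R z)^-1.
Proof.
have n1 := lt0r_neq0 N1_gt0; have n0 := lt0r_neq0 N0_gt0.
transitivity (\sum_i ((z i)%:R / N1 R z ^+ 2 + (1 - (z i)%:R) / N0 R z ^+ 2)).
  by apply: eq_bigr => i _; rewrite /assign_weight; case: (z i) => /=; field; rewrite n1 n0.
rewrite big_split /= -!big_distrl /= sum_untreated -/(N1 R z).
by field; rewrite n1 n0.
Qed.

Lemma norm_assign_weight_le i : `|assign_weight i| <= (N1 R z)^-1 + (N0 R z)^-1.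
Proof.
have n1 : 0 < (N1 R z)^-1 by rewrite invr_gt0.
have n0 : 0 < (N0 R z)^-1 by rewrite invr_gt0.
rewrite /assign_weight; case: (z i) => /=.
  by rewrite subrr mul0r subr0 mul1r gtr0_norm //; lra.
by rewrite mul0r sub0r subr0 mul1r normrN gtr0_norm //; lra.
Qed.

Lemma cstr_d_ge1 (K : nat) (eps : R) (X : Xvar N K) : 1 <= eps -> cstr_d eps z X.
Proof.
move=> e1 a k; apply: le_trans e1; rewrite ler_norml.
have n1 : 0 < (N1 R z)^-1 by rewrite invr_gt0.
have n0 : 0 < (N0 R z)^-1 by rewrite invr_gt0.
apply/andP; split.
  apply: (le_trans (y := \sum_i - ((1 - (z i)%:R) / N0 R z))).
    by rewrite sumrN -big_distrl /= sum_untreated mulfV ?lt0r_neq0.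
  by apply: ler_sum => i _; case: (z i); case: (X _) => /=; lra.
apply: (le_trans (y := \sum_i (z i)%:R / N1 R z)).
  by apply: ler_sum => i _; case: (z i); case: (X _) => /=; lra.
by rewrite -big_distrl /= mulfV ?lt0r_neq0.
Qed.

End AssignmentWeights.

Section TrueIndicator.
Variables (R : realType) (N K : nat) (pF : 'I_K * 'I_K -> R).
Hypothesis pF_pmf : is_pmf pF.
Implicit Types (z : assign N) (y : pouts N K).

Definition lab_eq (a : bool) (k : 'I_K) (v : 'I_K * 'I_K) : bool :=
  (if a then v.2 else v.1) == k.

Lemma margF_mass a k : margF pF a k = \sum_(v | lab_eq a k v) pF v.
Proof.
pose F l j := if lab_eq a k (l, j) then pF (l, j) else 0.
transitivity (\sum_(v : 'I_K * 'I_K) F v.1 v.2); last first.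
  by rewrite [RHS]big_mkcond; apply: eq_bigr => -[l j].
rewrite -pair_bigA {}/F /margF /lab_eq /=; case: a.
  by apply: eq_bigr => l _; rewrite -big_mkcond big_pred1_eq.
rewrite [RHS](bigD1 k) //= eqxx [X in _ = _ + X]big1 ?addr0 // => l /negbTE l_k.
by rewrite big1 // => j _; rewrite l_k.
Qed.

Lemma sum_margF a : \sum_k margF pF a k = 1.
Proof.
rewrite -pF_pmf.2 (partition_big (fun v : 'I_K * 'I_K => if a then v.2 else v.1) xpredT) //=.
by apply: eq_bigr => k _; rewrite margF_mass.
Qed.

Lemma cstr_d_XtrueE (eps : R) z y : cstr_d eps z (Xtrue y) <->
  forall a k, `|wcount (lab_eq a k) (assign_weight R z) y| <= eps.
Proof.
have e a k : \sum_i ((Xtrue y) (a, i, k))%:R * ((z i)%:R / N1 R z - (1 - (z i)%:R) / N0 R z)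
             = wcount (lab_eq a k) (assign_weight R z) y.
  by apply: eq_bigr => i _; rewrite ffunE.
by split=> h a k; [rewrite -e | rewrite e].
Qed.

Lemma suppF_Ylab y a i : \prod_j pF (y j) != 0 -> suppF pF a (Ylab y a i).
Proof.
move=> W0; have pFi : pF (y i) != 0.
  by apply: contraNneq W0 => pFi0; rewrite (bigD1 i) //= pFi0 mul0r.
rewrite /suppF margF_mass (bigD1 (y i)) /=; last exact: eqxx.
apply: ltr_pwDl; first by rewrite lt_neqAle eq_sym pFi pF_pmf.1.
by apply: sumr_ge0 => v _; apply: pF_pmf.1.
Qed.

Lemma Xtrue_feasible (yv : 'I_K -> R) (eps : R) z y : injective yv ->
  \prod_i pF (y i) != 0 -> cstr_d eps z (Xtrue y) -> feasible yv pF eps z y (Xtrue y).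
Proof.
move=> yv_inj W0 d_ok; split=> //.
- move=> i k; rewrite ffunE /Yobs /=.
  by split=> [/eqP->|/yv_inj->] //; rewrite eqxx.
- move=> a i k; rewrite ffunE /=; apply: contraNF => /eqP <-.
  exact: suppF_Ylab.
- move=> a i; rewrite (bigD1 (Ylab y a i)) //= ffunE eqxx big1 // => k k_ne.
  by rewrite ffunE /= eq_sym (negbTE k_ne).
Qed.

Lemma Xtrue_violation_le_tails (eps : R) z :
  \sum_(y | ~~ `[< cstr_d eps z (Xtrue y) >]) \prod_i pF (y i) <=
  \sum_(ak : bool * 'I_K)
    \sum_(y | eps < `|wcount (lab_eq ak.1 ak.2) (assign_weight R z) y|) \prod_i pF (y i).
Proof.
apply: union_bound => [y|y /asboolPn d_ko]; first exact: prod_pmf_ge0.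
apply: contrapT => /forallNP viol; apply/d_ko/cstr_d_XtrueE => a k.
by rewrite leNgt; apply/negP; apply: (viol (a, k)).
Qed.

End TrueIndicator.

Section ConditionalViolation.
Variables (R : realType) (N K : nat) (pF : 'I_K * 'I_K -> R).
Hypothesis pF_pmf : is_pmf pF.

Lemma Xtrue_violation_le_mgf z (eps lam : R) :
  0 < N1 R z -> 0 < N0 R z -> 0 <= lam -> 2 < expR (lam * eps) ->
  \sum_(y : pouts N K | ~~ `[< cstr_d eps z (Xtrue y) >]) \prod_i pF (y i) <=
  4 * (expR (expm1_sum (fun i => lam * assign_weight R z i) / 2)
       + expR (expm1_sum (fun i => - (lam * assign_weight R z i)) / 2) - 2)
    / (expR (lam * eps) - 2).
Proof.
move=> n1 n0 lam0 lam_eps; have w0 := sum_assign_weight n1 n0.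
set G := (X in 4 * X / _).
apply: le_trans (Xtrue_violation_le_tails pF_pmf eps z) _.
apply: (le_trans (y := \sum_(ak : bool * 'I_K)
  margF pF ak.1 ak.2 * (2 * G / (expR (lam * eps) - 2)))).
  apply: ler_sum => -[a k] _; rewrite margF_mass /=.
  apply: le_trans (wcount_tail_le pF_pmf (lab_eq a k) w0 lam0 lam_eps) _.
  by rewrite -/G; lra.
by rewrite -big_distrl -pair_bigA big_bool !(sum_margF pF_pmf) /=; lra.
Qed.

Lemma Xtrue_violation_le z (eps L : R) :
  0 < eps -> eps <= 1 -> 0 < L -> 0 < N1 R z -> 0 < N0 R z ->
  (N1 R z)^-1 + (N0 R z)^-1 <= 64/31/L -> 2 < expR (eps ^+ 2 * L / 4) ->
  \sum_(y : pouts N K | ~~ `[< cstr_d eps z (Xtrue y) >]) \prod_i pF (y i)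
    <= 8 * expR (- (eps ^+ 2 * L / 4)).
Proof.
move=> e0 e1 L0 n1 n0 SL u2.
set w := assign_weight R z; set S := _ + _ in SL.
have S0 : 0 < S by rewrite addr_gt0 ?invr_gt0.
set lam := eps / S; set V := eps ^+ 2 / S.
have lam0 : 0 <= lam by rewrite divr_ge0 ?ltW.
have lam_eps : lam * eps = V by rewrite /lam /V; field; rewrite gt_eqF.
have lamw0 : \sum_i lam * w i = 0.
  by rewrite -big_distrr /= sum_assign_weight // mulr0.
have lamw1 i : `|lam * w i| <= 1.
  rewrite normrM ger0_norm //; apply: (le_trans (y := lam * S)).
    exact/ler_wpM2l/norm_assign_weight_le.
  by rewrite /lam mulfVK ?gt_eqF.
have lamw2 : \sum_i (lam * w i) ^+ 2 = V.
  under eq_bigr do rewrite exprMn; rewrite -big_distrr /= sum_assign_weight_sqr //.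
  by rewrite -/S /lam /V; field; rewrite gt_eqF.
have A_le : expm1_sum (fun i => lam * w i) <= 7/9 * V.
  by rewrite -lamw2; exact: expm1_sum_le_sqr.
have B_le : expm1_sum (fun i => - (lam * w i)) <= 7/9 * V.
  rewrite -lamw2; under [X in _ <= _ * X]eq_bigr do rewrite -sqrrN.
  by apply: expm1_sum_le_sqr => [|i]; rewrite ?sumrN ?lamw0 ?oppr0 ?normrN.
have u0 : 0 <= eps ^+ 2 * L by rewrite mulr_ge0 ?sqr_ge0 ?ltW.
have uV : 31/64 * (eps ^+ 2 * L) <= V.
  rewrite ler_pdivlMr // in SL; rewrite /V ler_pdivlMr //.
  have : 0 <= eps ^+ 2 * (64/31 - S * L) by rewrite mulr_ge0 ?sqr_ge0 ?subr_ge0.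
  lra.
have V2 : 2 < expR (lam * eps).
  by rewrite lam_eps; apply: lt_le_trans u2 _; rewrite ler_expR; lra.
apply: le_trans (Xtrue_violation_le_mgf n1 n0 lam0 V2) _.
by rewrite lam_eps; exact: expR_ratio_le.
Qed.

Lemma Xtrue_violation_le_dev z (eps L m : R) :
  0 < eps -> 0 < L -> L <= m -> L <= N%:R - m ->
  \sum_(y : pouts N K | ~~ `[< cstr_d eps z (Xtrue y) >]) \prod_i pF (y i)
    <= ((L ^+ 2 / 32 <= (N1 R z - m) ^+ 2)%R : bool)%:R + 8 * expR (- (eps ^+ 2 * L / 4)).
Proof.
move=> e0 L0 Lm LM.
have e8_ge0 : 0 <= 8 * expR (- (eps ^+ 2 * L / 4)) by rewrite mulr_ge0 ?expR_ge0.
have viol_le1 := sum_prod_pmf_le1 pF_pmf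
  (fun y : pouts N K => ~~ `[< cstr_d eps z (Xtrue y) >]).
have [_|dev] := leP (L ^+ 2 / 32) ((N1 R z - m) ^+ 2); first by rewrite /=; lra.
have n_sum : N1 R z + N0 R z = m + (N%:R - m) by rewrite /N0; ring.
have [n1 n0 SL] := invD_le_of_near_mean L0 Lm LM n_sum dev.
rewrite add0r; have [e1|e1] := lerP 1 eps.
  by rewrite big_pred0 // => y; rewrite asboolT //; exact: (cstr_d_ge1 n1 n0 (Xtrue y) e1).
have [e8_lt|] := ltP (8 * expR (- (eps ^+ 2 * L / 4))) 1; last by lra.
apply: Xtrue_violation_le => //; first exact: ltW.
rewrite expRN ltr_pdivrMr ?expR_gt0 // mul1r in e8_lt; lra.
Qed.

End ConditionalViolation.

Section AssignmentLaw.
Variables (R : realType) (N : nat) (pZ : assign N -> R).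
Hypothesis pZ_pmf : is_pmf pZ.

Lemma Ptil_bounds : 0 < Ptil pZ ->
  [/\ 0 < N%:R * Ptil pZ, N%:R * Ptil pZ <= \sum_i Pi pZ i
    & N%:R * Ptil pZ <= N%:R - \sum_i Pi pZ i].
Proof.
move=> P0; have N0 : (N%:R : R) != 0.
  apply: contraTneq P0 => N_0.
  by rewrite /Ptil /Pbar N_0 invr0 mul0r subr0 min_l ?ler01 // ltxx.
have NP : N%:R * Pbar pZ = \sum_i Pi pZ i by rewrite /Pbar mulrA mulfV ?mul1r.
have N_gt0 : (0 : R) < N%:R by rewrite lt_neqAle eq_sym N0 ler0n.
split; first by rewrite mulr_gt0.
  by rewrite -NP; apply: ler_wpM2l; [exact: ltW | rewrite /Ptil ge_min lexx].
rewrite -NP -[X in _ <= X - _]mulr1 -mulrBr; apply: ler_wpM2l; first exact: ltW.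
by rewrite /Ptil ge_min lexx orbT.
Qed.

Lemma mean_N1 : \sum_z pZ z * N1 R z = \sum_i Pi pZ i.
Proof.
rewrite /N1 /Pi /EZ; under eq_bigr do rewrite big_distrr.
by rewrite exchange_big.
Qed.

Lemma var_N1 :
  \sum_z pZ z * (N1 R z - \sum_i Pi pZ i) ^+ 2 = \sum_i \sum_j CovZ pZ i j.
Proof.
set m := \sum_i Pi pZ i.
have sqr_mean : \sum_z pZ z * N1 R z ^+ 2
                = \sum_i \sum_j EZ pZ (fun z => (z i)%:R * (z j)%:R).
  transitivity (\sum_z \sum_i \sum_j pZ z * ((z i)%:R * (z j)%:R)).
    apply: eq_bigr => z _; rewrite expr2 /N1 big_distrlr mulr_sumr.
    by apply: eq_bigr => i _; rewrite mulr_sumr.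
  by rewrite exchange_big; apply: eq_bigr => i _; rewrite exchange_big.
have -> : \sum_i \sum_j CovZ pZ i j
          = \sum_i \sum_j EZ pZ (fun z => (z i)%:R * (z j)%:R) - m ^+ 2.
  rewrite /CovZ expr2 mulr_suml -sumrB; apply: eq_bigr => i _.
  by rewrite mulr_sumr -sumrB.
have -> : \sum_z pZ z * (N1 R z - m) ^+ 2 = \sum_z pZ z * N1 R z ^+ 2
    - 2 * m * \sum_z pZ z * N1 R z + m ^+ 2 * \sum_z pZ z.
  rewrite (big_distrr (2 * m)) (big_distrr (m ^+ 2)) -sumrB -big_split /=.
  by apply: eq_bigr => z _; ring.
by rewrite sqr_mean mean_N1 pZ_pmf.2 -/m; ring.
Qed.

Lemma chebyshev_N1 (c : R) : 0 < c ->
  \sum_(z | c <= (N1 R z - \sum_i Pi pZ i) ^+ 2) pZ z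
    <= (\sum_i \sum_j CovZ pZ i j) / c.
Proof.
move=> c0; rewrite -var_N1.
exact: markov_sum c0 pZ_pmf.1 (fun z => sqr_ge0 _) (fun z dz => dz).
Qed.

End AssignmentLaw.

Section JointLaw.
Variables (R : realType) (N K : nat) (pZ : assign N -> R) (pF : 'I_K * 'I_K -> R).
Hypotheses (pZ_pmf : is_pmf pZ) (pF_pmf : is_pmf pF).
Implicit Types E : assign N -> pouts N K -> bool.

Lemma ProbC E :
  Prob pZ pF E = 1 - \sum_z pZ z * \sum_(y : pouts N K | ~~ E z y) \prod_i pF (y i).
Proof.
rewrite /Prob /jointP -[X in X - _]pZ_pmf.2 -sumrB; apply: eq_bigr => z _.
rewrite -!big_distrr /= -[X in X - _]mulr1 -mulrBr; congr (_ * _).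
by rewrite -[X in _ = X - _](sum_prod_pmf N pF_pmf) [X in _ = X - _](bigID (E z)) /= addrK.
Qed.

Lemma Prob_le E E' :
  (forall z (y : pouts N K), \prod_i pF (y i) != 0 -> E z y -> E' z y) ->
  Prob pZ pF E <= Prob pZ pF E'.
Proof.
move=> EE'; apply: ler_sum => z _; rewrite [leLHS]big_mkcond [leRHS]big_mkcond.
apply: ler_sum => y _; rewrite /jointP.
have [W0|W0] := eqVneq (\prod_i pF (y i)) 0; first by rewrite W0 mulr0 !if_same.
case: (boolP (E z y)) => [/(EE' _ _ W0)->//|_].
by case: ifP => // _; rewrite mulr_ge0 ?pZ_pmf.1 ?prod_pmf_ge0.
Qed.

Lemma mean_Xtrue_violation_le (eps : R) : 0 < eps -> 0 < Ptil pZ ->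
  \sum_z pZ z * \sum_(y : pouts N K | ~~ `[< cstr_d eps z (Xtrue y) >]) \prod_i pF (y i)
    <= beta pZ eps.
Proof.
move=> e0 P0; have [L0 Lm LM] := Ptil_bounds P0.
set L := N%:R * Ptil pZ in L0 Lm LM *; set m := \sum_i Pi pZ i in Lm LM *.
set e8 := 8 * expR (- (eps ^+ 2 * L / 4)).
pose dev (z : assign N) := (L ^+ 2 / 32 <= (N1 R z - m) ^+ 2)%R.
apply: (le_trans (y := \sum_z pZ z * ((dev z)%:R + e8))).
  apply: ler_sum => z _; apply: ler_wpM2l; first exact: pZ_pmf.1.
  exact: Xtrue_violation_le_dev.
under eq_bigr do rewrite mulrDr; rewrite big_split /= -big_distrl /= pZ_pmf.2 mul1r.
have cheb : \sum_z pZ z * (dev z)%:R <= 32 / L ^+ 2 * \sum_i \sum_j CovZ pZ i j.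
  rewrite [32 / _ * _]mulrC -[32 / _]invf_div.
  apply: (le_trans (y := \sum_(z | dev z) pZ z)).
    by rewrite [leRHS]big_mkcond; apply: ler_sum => z _; case: (dev z); rewrite ?mulr1 ?mulr0.
  by apply: (chebyshev_N1 pZ_pmf); rewrite divr_gt0 ?exprn_gt0.
have -> : beta pZ eps = e8 + 32 / L ^+ 2 * \sum_i \sum_j CovZ pZ i j.
  by rewrite /beta /e8 /L; congr (_ * expR _ + _ / _ * _); ring.
lra.
Qed.

End JointLaw.

Theorem theorem1 (R : realType) (N K : nat)
  (yv : 'I_K -> R) (yv_inj : injective yv)
  (pF : 'I_K * 'I_K -> R) (pF_pmf : is_pmf pF)
  (pZ : assign N -> R) (pZ_pmf : is_pmf pZ)
  (tauhat : assign N -> ('I_N -> R) -> R)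
  (Q : Xidx N K -> Xidx N K -> R) (Q_sym : forall s t, Q s t = Q t s)
  (Q_var : forall y : pouts N K, VarZ pZ yv tauhat y = quadf Q (Xtrue y))
  (eps : R) (eps_gt0 : 0 < eps) (Ptil_gt0 : 0 < Ptil pZ) :
  1 - beta pZ eps <=
    Prob pZ pF (fun z y => `[< cstr_d eps z (Xtrue y) >])
  /\
  1 - beta pZ eps <=
    Prob pZ pF (fun z y =>
      `[< exists X : Xvar N K,
            feasible yv pF eps z y X /\ VarZ pZ yv tauhat y <= quadf Q X >]).
Proof.
have viol := mean_Xtrue_violation_le pZ_pmf pF_pmf eps_gt0 Ptil_gt0.
have d_prob : 1 - beta pZ eps <= Prob pZ pF (fun z y => `[< cstr_d eps z (Xtrue y) >]).
  by rewrite ProbC //; lra.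
split=> //; apply: (le_trans d_prob); apply: Prob_le => // z y W0 /asboolP d_ok.
apply/asboolP; exists (Xtrue y); split; first exact: Xtrue_feasible.
by rewrite Q_var.
Qed.
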